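(* Every $2\times2$ column-stochastic matrix is divisible in $s(2)$.
   Context: $s(2)$ denotes the set of $2\times 2$ real matrices with non-negative entries whose columns each sum to $1$; it is a monoid under matrix multiplication whose group of units is the set of $2\times2$ permutation matrices. $A\in s(2)$ is indivisible if for every decomposition $A=BC$ with $B,C\in s(2)$ exactly one of $B,C$ is a permutation matrix, and divisible otherwise. *)

From HB Require Import structures.
From mathcomp Require Import all_boot all_order all_algebra all_fingroup.
From mathcomp Require Import reals.
Set Implicit Arguments. Unset Strict Implicit. Unset Printing Implicit Defensive.
Import Order.TTheory GRing.Theory Num.Theory.
Local Open Scope ring_scope.

Definition s2 (R : realType) (A : 'M[R]_2) : Prop :=
  (forall i j, 0 <= A i j) /\ (forall j, \sum_(i < 2) A i j = 1).

Definition indivisible2 (R : realType) (A : 'M[R]_2) : Prop :=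
  forall B C : 'M[R]_2, s2 B -> s2 C -> A = B *m C ->
    (is_perm_mx B (+) is_perm_mx C)%B.

Definition divisible2 (R : realType) (A : 'M[R]_2) : Prop := ~ indivisible2 A.

From mathcomp Require Import all_boot all_order all_algebra all_fingroup.
From mathcomp Require Import reals.
From mathcomp Require Import ring lra.
Import Order.TTheory GRing.Theory Num.Theory.
Set Implicit Arguments. Unset Strict Implicit. Unset Printing Implicit Defensive.
Local Open Scope ring_scope.

(* The matrix stoch2 x y of s(2) with first row (x, y) acts on the first
   coordinate of a probability vector as the affine map t |-> y + (x - y) t of
   [0, 1]; products are compositions, and it is a permutation matrix iff
   {x, y} = {0, 1}.  For A = stoch2 a b set lo = ab/2 and hi = 1 - (1-a)(1-b)/2.
   Then lo < hi and a, b lie in [lo, hi], so A = stoch2 hi lo * C, where C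
   rescales (a, b) from [lo, hi] to [0, 1].  With these choices each factor is
   a permutation matrix exactly when A is, so the factors are either both
   permutations or both not, and A is divisible. *)

Lemma ord2_cases (i : 'I_2) : i = 0 \/ i = 1.
Proof. by case: i => [[|[|//]] ?]; [left | right]; apply/val_inj. Qed.

Lemma sum_ord2 (V : nmodType) (F : 'I_2 -> V) : \sum_(i < 2) F i = F 0 + F 1.
Proof. by rewrite big_ord_recl big_ord1; congr (_ + F _); apply/val_inj. Qed.

Definition stoch2 (R : nzRingType) (x y : R) : 'M[R]_2 :=
  \matrix_(i, j) let z := if j == 0 then x else y in if i == 0 then z else 1 - z.

Lemma mul_stoch2 (R : comNzRingType) (x y u v : R) :
  stoch2 x y *m stoch2 u v = stoch2 (x * u + y * (1 - u)) (x * v + y * (1 - v)).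
Proof.
apply/matrixP => i j; rewrite !mxE sum_ord2 !mxE /=.
by case: (ord2_cases i) => ->; case: (ord2_cases j) => -> /=; ring.
Qed.

Lemma is_perm_stoch2P (R : idomainType) (x y : R) :
  reflect (x + y = 1 /\ x * y = 0) (is_perm_mx (stoch2 x y)).
Proof.
apply: (iffP (is_perm_mxP _)) => [[s /matrixP eq_s] | [xy1 xy0]].
  have := eq_s 0 0; have := eq_s 0 1; rewrite !mxE /=.
  by case: (ord2_cases (s 0)) => -> /= -> ->; rewrite ?mul1r ?mulr0 ?mul0r ?addr0 ?add0r.
move: xy0; have {xy1} -> : y = 1 - x by rewrite -xy1 addrAC subrr add0r.
move/eqP; rewrite mulf_eq0 subr_eq0 => /orP[/eqP -> | /eqP <-].
- exists (tperm 0 1); apply/matrixP => i j; rewrite !mxE.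
  by case: (ord2_cases i) => ->; case: (ord2_cases j) => -> /=;
    rewrite ?tpermL ?tpermR ?subr0 ?subrr.
- exists 1%g; apply/matrixP => i j; rewrite !mxE perm1.
  by case: (ord2_cases i) => ->; case: (ord2_cases j) => -> /=; rewrite ?subrr ?subr0.
Qed.

Lemma is_perm_stoch2_divP (F : fieldType) (x y d : F) : d != 0 ->
  reflect (x + y = d /\ x * y = 0) (is_perm_mx (stoch2 (x / d) (y / d))).
Proof.
move=> d_neq0; have dd_neq0 : d^-1 * d^-1 != 0 by rewrite mulf_neq0 ?invr_neq0.
apply: (iffP (is_perm_stoch2P _ _)); rewrite -mulrDl mulrACA => -[sum_xy prod_xy].
  split; first exact: divr1_eq.
  by apply/eqP; move/eqP: prod_xy; rewrite mulf_eq0 (negbTE dd_neq0) orbF.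
by rewrite sum_xy divff // prod_xy mul0r.
Qed.

Lemma stoch2_factor (F : fieldType) (a b lo hi : F) : hi != lo ->
  stoch2 hi lo *m stoch2 ((a - lo) / (hi - lo)) ((b - lo) / (hi - lo)) = stoch2 a b.
Proof. by rewrite -subr_eq0 => d_neq0; rewrite mul_stoch2; congr stoch2; field. Qed.

Lemma rescale_in01 (F : realFieldType) (lo hi x : F) :
  lo < hi -> lo <= x <= hi -> 0 <= (x - lo) / (hi - lo) <= 1.
Proof.
move=> lo_hi /andP[lo_x x_hi]; have d_gt0 : 0 < hi - lo by rewrite subr_gt0.
apply/andP; split; first by apply: divr_ge0; rewrite subr_ge0 // ltW.
by rewrite ler_pdivrMr // mul1r lerD2r.
Qed.

Lemma s2_stoch2 (R : realType) (x y : R) :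
  s2 (stoch2 x y) <-> (0 <= x <= 1) /\ (0 <= y <= 1).
Proof.
split=> [[ge0 _] | [/andP[x_ge0 x_le1] /andP[y_ge0 y_le1]]].
  have := ge0 0 0; have := ge0 1 0; have := ge0 0 1; have := ge0 1 1.
  by rewrite !mxE /= !subr_ge0 => -> -> -> ->.
split=> [i j | j]; last by rewrite sum_ord2 !mxE /= addrC subrK.
rewrite mxE; case: (ord2_cases i) => ->; case: (ord2_cases j) => -> /=;
  by rewrite ?subr_ge0.
Qed.

Lemma s2_stoch2E (R : realType) (A : 'M[R]_2) : s2 A -> A = stoch2 (A 0 0) (A 0 1).
Proof.
move=> [_ sum1]; apply/matrixP => i j; rewrite mxE.
case: (ord2_cases i) => ->; case: (ord2_cases j) => -> //=;
  by apply/eqP; rewrite eq_sym subr_eq addrC -(sum_ord2 (A^~ _)) sum1.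
Qed.

Lemma divisible2_mul (R : realType) (B C : 'M[R]_2) :
  s2 B -> s2 C -> is_perm_mx B = is_perm_mx C -> divisible2 (B *m C).
Proof. by move=> sB sC eq_perm indiv; have := indiv B C sB sC erefl; rewrite eq_perm addbb. Qed.

Section CanonicalFactorization.
Variables (R : realType) (a b : R).
Hypotheses (a01 : 0 <= a <= 1) (b01 : 0 <= b <= 1).

Local Notation lo := (a * b / 2).
Local Notation hi := (1 - (1 - a) * (1 - b) / 2).

(* [lra] and [nra] ignore section hypotheses, so the bounds are moved into the proof context. *)
Local Ltac bounds := case/andP: a01 b01 => ? ? /andP[? ?].

Lemma hi_add_lo : hi + lo = (1 + a + b) / 2.
Proof. by field. Qed.

Lemma lo_lt_hi : lo < hi.
Proof. by bounds; nra. Qed.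

Lemma s2_stoch2_hi_lo : s2 (stoch2 hi lo).
Proof. by apply/s2_stoch2; bounds; split; apply/andP; split; nra. Qed.

Lemma s2_stoch2_rescaled :
  s2 (stoch2 ((a - lo) / (hi - lo)) ((b - lo) / (hi - lo))).
Proof.
by apply/s2_stoch2; split; apply: rescale_in01 lo_lt_hi _; bounds; apply/andP; split; nra.
Qed.

Lemma is_perm_stoch2_hi_lo : is_perm_mx (stoch2 hi lo) = is_perm_mx (stoch2 a b).
Proof.
have hi_gt0 : 0 < hi by bounds; nra.
have sum_hl := hi_add_lo.
apply/is_perm_stoch2P/is_perm_stoch2P => -[sum1 prod0]; split.
- lra.
- by move/eqP: prod0; rewrite mulf_eq0 gt_eqF //= => /eqP; lra.
- lra.
- by rewrite prod0 mul0r mulr0.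
Qed.

Lemma is_perm_stoch2_rescaled :
  is_perm_mx (stoch2 ((a - lo) / (hi - lo)) ((b - lo) / (hi - lo))) =
  is_perm_mx (stoch2 a b).
Proof.
have prod_lo : (a - lo) * (b - lo) = a * b * ((2 - a) * (2 - b) / 4) by field.
have coef_neq0 : (2 - a) * (2 - b) / 4 != 0 by apply/lt0r_neq0; bounds; nra.
have d_neq0 : hi - lo != 0 by rewrite subr_eq0 gt_eqF ?lo_lt_hi.
have sum_hl := hi_add_lo.
apply/(is_perm_stoch2_divP _ _ d_neq0)/is_perm_stoch2P => -[sum1 prod0]; split.
- lra.
- by move/eqP: prod0; rewrite prod_lo mulf_eq0 (negbTE coef_neq0) orbF => /eqP.
- lra.
- by rewrite prod_lo prod0 mul0r.
Qed.

Lemma divisible2_stoch2 : divisible2 (stoch2 a b).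
Proof.
rewrite -(stoch2_factor a b (negbT (gt_eqF lo_lt_hi))).
apply: divisible2_mul s2_stoch2_hi_lo s2_stoch2_rescaled _.
by rewrite is_perm_stoch2_hi_lo is_perm_stoch2_rescaled.
Qed.

End CanonicalFactorization.

Theorem fact2 (R : realType) (A : 'M[R]_2) : s2 A -> divisible2 A.
Proof.
move=> sA; have eqA := s2_stoch2E sA; rewrite {}eqA in sA *.
by case/s2_stoch2: sA; apply: divisible2_stoch2.
Qed.
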